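(* Let $q\ge1$, $n=2^q$, and take the operator basis $\{\tilde E_\alpha\}$ of the $n\times n$ complex matrices to be the matrix units $\{n_{[ij]}\}_{1\le i,j\le n}$, indexing $\alpha$ by pairs $(i,j)$. Then there exist a density matrix $\rho$ on $\mathbb{C}^n\otimes\mathbb{C}^n$ and an operator $R=\sum_m a_m M_m^\dagger M_m$ (for some POVM $\{M_m\}$ and real numbers $a_m$) such that the tensor $A_{\alpha\beta\gamma\delta}=\mathrm{tr}\big[R(\tilde E_\alpha\otimes\tilde E_\gamma)\rho(\tilde E_\beta^\dagger\otimes\tilde E_\delta^\dagger)\big]$ is diagonal with nonzero diagonal entries, i.e. $A_{\alpha\beta\gamma\delta}=0$ whenever $(\alpha,\beta)\ne(\gamma,\delta)$, and $A_{\alpha\beta\alpha\beta}\ne0$ for all $\alpha,\beta$.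
   Context: $n_{[ij]}$ denotes the $n\times n$ matrix whose $(i,j)$ entry is $1$ and all other entries are $0$. In a two-player static quantum game, $\rho$ is the initial state shared between the two players (each holding one $\mathbb{C}^n$ factor), $\{M_m\}$ is the referee's POVM and $a_m$ the payoff to player I on outcome $m$, so that player I's payoff for chi-matrix strategies $\chi,\xi$ is $\sum_{\alpha,\beta,\gamma,\delta}\mathrm{Re}[\chi_{\alpha\beta}\xi_{\gamma\delta}A_{\alpha\beta\gamma\delta}]$. *)

From HB Require Import structures.
From mathcomp Require Import all_boot all_order all_algebra.
Set Implicit Arguments. Unset Strict Implicit. Unset Printing Implicit Defensive.
Import Order.TTheory GRing.Theory Num.Theory.
Local Open Scope ring_scope.

(* The index k : 'I_(m*n) of C^m (x) C^n corresponds to the pair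
   (i, j) : 'I_m * 'I_n via MathComp's mxvec_index convention. *)
Definition unpair_idx (m n : nat) (k : 'I_(m * n)) : 'I_m * 'I_n :=
  enum_val (cast_ord (esym (mxvec_cast m n)) k).

Definition tensmx (C : numClosedFieldType) (m1 n1 m2 n2 : nat)
  (A : 'M[C]_(m1, n1)) (B : 'M[C]_(m2, n2)) : 'M[C]_(m1 * m2, n1 * n2) :=
  \matrix_(k, l) (A (unpair_idx k).1 (unpair_idx l).1 *
                  B (unpair_idx k).2 (unpair_idx l).2).

Lemma tensmxE (C : numClosedFieldType) (m1 n1 m2 n2 : nat)
  (A : 'M[C]_(m1, n1)) (B : 'M[C]_(m2, n2)) i1 i2 j1 j2 :
  tensmx A B (mxvec_index i1 i2) (mxvec_index j1 j2) = A i1 j1 * B i2 j2.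
Proof. by rewrite mxE /unpair_idx /mxvec_index !cast_ordK !enum_rankK. Qed.

Definition adj (C : numClosedFieldType) (m n : nat) (A : 'M[C]_(m, n))
  : 'M[C]_(n, m) := (map_mx Num.conj A)^T.

Definition psdmx (C : numClosedFieldType) (N : nat) (A : 'M[C]_N) : Prop :=
  forall v : 'cV[C]_N, 0 <= (adj v *m A *m v) 0 0.

Definition density_mx (C : numClosedFieldType) (N : nat) (rho : 'M[C]_N)
  : Prop := adj rho = rho /\ psdmx rho /\ \tr rho = 1.

Definition povm (C : numClosedFieldType) (N k : nat) (M : 'I_k -> 'M[C]_N)
  : Prop := \sum_(m < k) adj (M m) *m M m = 1%:M.

Definition Eunit (C : numClosedFieldType) (n : nat) (al : 'I_n * 'I_n)
  : 'M[C]_n := delta_mx al.1 al.2.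

Definition Acoef (C : numClosedFieldType) (n : nat) (R rho : 'M[C]_(n * n))
  (al be ga de : 'I_n * 'I_n) : C :=
  \tr (R *m tensmx (Eunit C al) (Eunit C ga) *m rho
         *m tensmx (adj (Eunit C be)) (adj (Eunit C de))).

From HB Require Import structures.
From mathcomp Require Import all_boot all_order all_algebra.
Set Implicit Arguments. Unset Strict Implicit. Unset Printing Implicit Defensive.
Import Order.TTheory GRing.Theory Num.Theory.
Local Open Scope ring_scope.

(* Take rho = R = the projector P onto the maximally entangled vector
   sum_i e_i (x) e_i, realised by the projective measurement {P, 1 - P} with
   payoffs 1 and 0.  For matrix units the trace defining A factorises as
   A_{(a1,a2)(b1,b2)(g1,g2)(d1,d2)} = R_{(b1,d1),(a1,g1)} rho_{(a2,g2),(b2,d2)},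
   and P_{(i,k),(j,l)} = [i = k][j = l] / n, so A is (1/n^2) times the
   indicator of alpha = gamma and beta = delta. *)

Section ConjugateTranspose.
Variable C : numClosedFieldType.

Lemma adjK m n (A : 'M[C]_(m, n)) : adj (adj A) = A.
Proof. by rewrite /adj map_trmx trmxK map_mxCK. Qed.

Lemma adjM m n p (A : 'M[C]_(m, n)) (B : 'M[C]_(n, p)) :
  adj (A *m B) = adj B *m adj A.
Proof. by rewrite /adj map_mxM trmx_mul. Qed.

Lemma adjZ m n (a : C) (A : 'M[C]_(m, n)) : adj (a *: A) = a^* *: adj A.
Proof. by apply/matrixP => i j; rewrite !mxE rmorphM. Qed.

Lemma adjB m n (A B : 'M[C]_(m, n)) : adj (A - B) = adj A - adj B.
Proof. by apply/matrixP => i j; rewrite !mxE rmorphB. Qed.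

Lemma adj1 n : adj (1%:M : 'M[C]_n) = 1%:M.
Proof. by apply/matrixP => i j; rewrite !mxE rmorph_nat eq_sym. Qed.

Lemma adj_delta m n (i : 'I_m) (j : 'I_n) :
  adj (delta_mx i j : 'M[C]_(m, n)) = delta_mx j i.
Proof. by apply/matrixP => x y; rewrite !mxE conjC_nat andbC. Qed.

Lemma mx11_mul_adj (x : 'M[C]_1) : (x *m adj x) 0 0 = `|x 0 0| ^+ 2.
Proof. by rewrite normCK mxE big_ord1 !mxE. Qed.

End ConjugateTranspose.

Section RankOneProjector.
Variables (C : numClosedFieldType) (N : nat).
Implicit Types v w : 'cV[C]_N.

Definition vnorm2 v : C := (adj v *m v) 0 0.

Definition line_proj v : 'M[C]_N := (vnorm2 v)^-1 *: (v *m adj v).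

Lemma vnorm2E v : vnorm2 v = \sum_i `|v i 0| ^+ 2.
Proof.
rewrite /vnorm2 mxE; apply: eq_bigr => i _.
by rewrite normCK mxE mulrC mxE.
Qed.

Lemma vnorm2_ge0 v : 0 <= vnorm2 v.
Proof. by rewrite vnorm2E sumr_ge0 // => i _; rewrite exprn_ge0. Qed.

Lemma vnorm2_eq0 v : (vnorm2 v == 0) = (v == 0).
Proof.
apply/eqP/eqP => [|->]; last by rewrite /vnorm2 mulmx0 mxE.
rewrite vnorm2E => /psumr_eq0P v0; apply/matrixP => i j.
have /eqP := v0 (fun k _ => exprn_ge0 2 (normr_ge0 (v k 0))) i isT.
by rewrite ord1 mxE expf_eq0 normr_eq0 => /andP[_ /eqP].
Qed.

Lemma line_projE v k l : line_proj v k l = (vnorm2 v)^-1 * (v k 0 * (v l 0)^*).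
Proof. by rewrite !mxE big_ord1 !mxE. Qed.

Lemma adj_line_proj v : adj (line_proj v) = line_proj v.
Proof.
rewrite adjZ adjM adjK conj_Creal // rpredV.
exact/ger0_real/vnorm2_ge0.
Qed.

Lemma line_proj_idem v : v != 0 -> line_proj v *m line_proj v = line_proj v.
Proof.
rewrite -vnorm2_eq0 => nz_v.
rewrite -scalemxAl -scalemxAr mulmxA -(mulmxA v) [adj v *m v]mx11_scalar.
by rewrite mul_mx_scalar -scalemxAl !scalerA -/(vnorm2 v) mulVf ?mulr1.
Qed.

Lemma line_proj_psd v : psdmx (line_proj v).
Proof.
move=> w; rewrite -scalemxAr -scalemxAl mxE mulr_ge0 ?invr_ge0 ?vnorm2_ge0 //.
have -> : adj w *m (v *m adj v) *m w = adj w *m v *m adj (adj w *m v).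
  by rewrite adjM adjK !mulmxA.
by rewrite mx11_mul_adj exprn_ge0.
Qed.

Lemma mxtrace_line_proj v : v != 0 -> \tr (line_proj v) = 1.
Proof.
rewrite -vnorm2_eq0 => nz_v.
by rewrite mxtraceZ mxtrace_mulC /mxtrace big_ord1 mulVf.
Qed.

Lemma density_line_proj v : v != 0 -> density_mx (line_proj v).
Proof.
move=> nz_v; split; first exact: adj_line_proj.
by split; [exact: line_proj_psd | exact: mxtrace_line_proj].
Qed.

End RankOneProjector.

Section ProjectiveMeasurement.
Variables (C : numClosedFieldType) (N : nat) (P : 'M[C]_N).
Hypotheses (adjP : adj P = P) (idemP : P *m P = P).

Definition proj_meas (m : 'I_2) : 'M[C]_N := if m == ord0 then P else 1%:M - P.

Lemma povm_proj_meas : povm proj_meas.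
Proof.
rewrite /povm big_ord_recr big_ord1 /= adjB adj1 adjP idemP mulmxBl mul1mx.
by rewrite !mulmxBr mulmx1 idemP subrr subr0 addrC subrK.
Qed.

Lemma proj_meas_observable :
  \sum_(m < 2) (m == ord0)%:R *: (adj (proj_meas m) *m proj_meas m) = P.
Proof. by rewrite big_ord_recr big_ord1 /= scale1r scale0r addr0 adjP idemP. Qed.

End ProjectiveMeasurement.

Section MatrixUnits.
Variable C : numClosedFieldType.

Lemma unpair_mxvec m n (i : 'I_m) (j : 'I_n) :
  unpair_idx (mxvec_index i j) = (i, j).
Proof. by rewrite /unpair_idx /mxvec_index cast_ordK enum_rankK. Qed.

Lemma eq_mxvec_index m n (i i' : 'I_m) (j j' : 'I_n) :
  (mxvec_index i j == mxvec_index i' j') = (i == i') && (j == j').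
Proof.
apply/eqP/andP => [E|[/eqP-> /eqP->]] //.
by have := congr1 (@unpair_idx m n) E; rewrite !unpair_mxvec => -[-> ->].
Qed.

Lemma tensmx_delta m1 n1 m2 n2 (i : 'I_m1) (j : 'I_n1) (k : 'I_m2) (l : 'I_n2) :
  tensmx (delta_mx i j : 'M[C]_(m1, n1)) (delta_mx k l : 'M[C]_(m2, n2))
  = delta_mx (mxvec_index i k) (mxvec_index j l).
Proof.
apply/matrixP => x y.
case/mxvec_indexP: x => i' k'; case/mxvec_indexP: y => j' l'.
by rewrite tensmxE !mxE !eq_mxvec_index -natrM mulnb andbACA.
Qed.

Lemma mulmx_delta_r m n p (X : 'M[C]_(m, n)) (a : 'I_n) (b : 'I_p) x y :
  (X *m delta_mx a b) x y = X x a * (y == b)%:R.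
Proof.
rewrite !mxE (bigD1 a) //= big1 => [|z /negbTE za]; last by rewrite !mxE za mulr0.
by rewrite !mxE eqxx addr0.
Qed.

Lemma mxtrace_mul_delta N (R rho : 'M[C]_N) a b c d :
  \tr (R *m delta_mx a b *m rho *m delta_mx c d) = R d a * rho b c.
Proof.
rewrite /mxtrace (bigD1 d) //= big1 => [|x /negbTE xd]; last first.
  by rewrite mulmx_delta_r xd mulr0.
rewrite mulmx_delta_r eqxx mulr1 addr0 mxE (bigD1 b) //= big1 => [|z /negbTE zb].
  by rewrite mulmx_delta_r eqxx mulr1 addr0.
by rewrite mulmx_delta_r zb mulr0 mul0r.
Qed.

Lemma AcoefE n (R rho : 'M[C]_(n * n)) (al be ga de : 'I_n * 'I_n) :
  Acoef R rho al be ga de =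
  R (mxvec_index be.1 de.1) (mxvec_index al.1 ga.1) *
  rho (mxvec_index al.2 ga.2) (mxvec_index be.2 de.2).
Proof. by rewrite /Acoef /Eunit !adj_delta !tensmx_delta mxtrace_mul_delta. Qed.

End MatrixUnits.

Section MaximallyEntangled.
Variables (C : numClosedFieldType) (n : nat).

Definition maxent_vec : 'cV[C]_(n * n) :=
  \col_k ((unpair_idx k).1 == (unpair_idx k).2)%:R.

Lemma maxent_vecE i j : maxent_vec (mxvec_index i j) 0 = (i == j)%:R.
Proof. by rewrite mxE unpair_mxvec. Qed.

Lemma maxent_vec_neq0 : (0 < n)%N -> maxent_vec != 0.
Proof.
move=> n_gt0; pose i0 : 'I_n := Ordinal n_gt0.
apply/eqP => /matrixP/(_ (mxvec_index i0 i0) 0).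
by rewrite maxent_vecE eqxx mxE => /eqP; rewrite oner_eq0.
Qed.

Lemma Acoef_maxent (al be ga de : 'I_n * 'I_n) :
  Acoef (line_proj maxent_vec) (line_proj maxent_vec) al be ga de
  = (vnorm2 maxent_vec)^-2 * ((al == ga) && (be == de))%:R.
Proof.
case: al be ga de => [a1 a2] [b1 b2] [g1 g2] [d1 d2].
rewrite AcoefE !line_projE !maxent_vecE !conjC_nat /= !xpair_eqE.
rewrite mulrACA -exprVn expr2 -!natrM !mulnb; congr (_ * _%:R).
by case: (a1 == g1); case: (a2 == g2); case: (b1 == d1); case: (b2 == d2).
Qed.

End MaximallyEntangled.

Theorem theorem3 (C : numClosedFieldType) (q n : nat) :
  (1 <= q)%N -> n = (2 ^ q)%N ->
  exists (rho : 'M[C]_(n * n)) (k : nat) (M : 'I_k -> 'M[C]_(n * n))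
         (a : 'I_k -> C),
    [/\ density_mx rho, povm M, (forall m, a m \is Num.real) &
      let R := \sum_(m < k) a m *: (adj (M m) *m M m) in
      (forall al be ga de : 'I_n * 'I_n,
          (al, be) <> (ga, de) -> Acoef R rho al be ga de = 0) /\
      (forall al be : 'I_n * 'I_n, Acoef R rho al be al be != 0)].
Proof.
move=> _ n_eq; have n_gt0 : (0 < n)%N by rewrite n_eq expn_gt0.
have nz_Phi : @maxent_vec C n != 0 by exact: maxent_vec_neq0.
pose P := line_proj (@maxent_vec C n).
have adjP : adj P = P by exact: adj_line_proj.
have idemP : P *m P = P by exact: line_proj_idem.
exists P, 2, (proj_meas P), (fun m => (m == ord0)%:R).
split; [exact: density_line_proj | exact: povm_proj_meas | by move=> m; apply: realn |].
rewrite /= proj_meas_observable //; split => [al be ga de neq | al be];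
  rewrite Acoef_maxent.
  suff /negbTE-> : ~~ ((al == ga) && (be == de)) by rewrite mulr0.
  by apply/negP => /andP[/eqP ea /eqP eb]; apply: neq; rewrite ea eb.
by rewrite !eqxx mulr1 invr_neq0 // expf_neq0 // vnorm2_eq0.
Qed.
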